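(* Let $\alpha\in[0,1)$, $\beta>0$, and $h(p)=g_\alpha(1-e^{-\beta p})$ for $p\in[0,1]$. (i) (Extinction) If $(1-\alpha)\beta\le1$, then $\lim_{k\to\infty}h^k(p)=0$ for all $p\in[0,1]$. (ii) (Survival) If $(1-\alpha)\beta>1$, then $\liminf_{k\to\infty}h^k(p)>0$ for all $p\in(0,1)$.
   Context: For $\alpha\in(0,1)$ let $g_\alpha(x)=\frac{(1-\sqrt{1-4(1-\alpha)x(1-x)})^3}{8(1-\alpha)^2x^2}$ for $x\in(0,1]$ and $g_\alpha(0)=0$; let $g_0(x)=x$ for $x\le1/2$ and $g_0(x)=(1-x)^3/x^2$ for $x>1/2$. $h^k$ denotes the $k$-th iterate of $h$. *)

From Stdlib Require Import Reals Lra.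
Open Scope R_scope.

Definition g0 (x : R) : R :=
  if Rle_dec x (1/2) then x else (1 - x) ^ 3 / x ^ 2.

Definition gpos (alpha x : R) : R :=
  if Req_EM_T x 0 then 0
  else (1 - sqrt (1 - 4 * (1 - alpha) * x * (1 - x))) ^ 3
         / (8 * (1 - alpha) ^ 2 * x ^ 2).

Definition g (alpha x : R) : R :=
  if Req_EM_T alpha 0 then g0 x else gpos alpha x.

Definition h (alpha beta p : R) : R := g alpha (1 - exp (- (beta * p))).

Fixpoint iter (k : nat) (f : R -> R) (x : R) : R :=
  match k with
  | O => x
  | S k' => f (iter k' f x)
  end.

(* The proof never needs continuity of g_alpha; it only uses the sandwich
     (1-alpha) x (1-x)^3 <= g_alpha(x) <= (1-alpha) x     (0 < x < 1),
   which turns into  (1-alpha)(1-e^{-bq}) e^{-3bq} <= h(q) <= (1-alpha)(1-e^{-bq}).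
   Two general facts about iterating a self-map of an interval then finish:
   - if 0 <= f q <= q on [0,1] and f moves every q >= eps down by a uniform
     amount d(eps) > 0, all orbits in [0,1] tend to 0 (monotone + Archimedes);
   - if f maps (0,1] into itself and f q >= min(q, eta), every orbit stays
     above min(p, eta).
   In the subcritical case (1-alpha)beta <= 1 the upper bound and the tangent-line
   inequality 1 - e^{-y} <= y give the first hypothesis; in the supercritical
   case the lower bound gives h(q) >= q for small q (since
   1 - e^{-y} >= y/(1+y) and e^{-3y} >= 1 - 3y) and h(q) >= eta > 0 otherwise. *)

From Stdlib Require Import Reals Lra Psatz Classical.
Open Scope R_scope.

Lemma iter_invariant (f : R -> R) (P : R -> Prop) :
  (forall q, P q -> P (f q)) -> forall k x, P x -> P (iter k f x).
Proof. intros Hf k x Hx. induction k as [|k IH]; simpl; auto. Qed.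

Lemma iter_tends_to_zero (f : R -> R) :
  (forall q, 0 <= q <= 1 -> 0 <= f q <= q) ->
  (forall eps, 0 < eps -> exists d, 0 < d /\
     forall q, eps <= q <= 1 -> f q <= q - d) ->
  forall p, 0 <= p <= 1 -> Un_cv (fun k => iter k f p) 0.
Proof.
  intros Hbelow Hgap p Hp eps Heps.
  set (u := fun k => iter k f p).
  assert (Hrange : forall k, 0 <= u k <= 1).
  { intro k. apply iter_invariant; auto. intros q Hq. specialize (Hbelow q Hq). lra. }
  assert (Hdecr : forall N n, (N <= n)%nat -> u n <= u N).
  { intros N n Hn. induction Hn as [|n _ IH]; [lra|].
    unfold u in *. simpl. specialize (Hbelow _ (Hrange n)). lra. }
  destruct (classic (exists N, u N < eps)) as [[N HN]|Hfar].
  - exists N. intros n Hn. unfold R_dist. rewrite Rminus_0_r.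
    specialize (Hdecr N n Hn). specialize (Hrange n).
    unfold u in *. rewrite Rabs_right by lra. lra.
  - (* the orbit would stay above eps, hence drop by d at every step *)
    exfalso.
    assert (Habove : forall n, eps <= u n).
    { intro n. apply Rnot_lt_le. intro Hn. apply Hfar. now exists n. }
    destruct (Hgap eps Heps) as [d [Hd Hstep]].
    assert (Hlinear : forall n, u n <= p - INR n * d).
    { induction n as [|n IH]; [simpl; unfold u; simpl; lra|].
      rewrite S_INR. unfold u in *. simpl.
      specialize (Hstep _ (conj (Habove n) (proj2 (Hrange n)))). lra. }
    destruct (INR_unbounded (p / d)) as [n Hn].
    assert (Hnd : p < INR n * d).
    { replace p with (p / d * d) by (field; lra). apply Rmult_lt_compat_r; lra. }
    specialize (Hlinear n). specialize (Hrange n). lra.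
Qed.

Lemma iter_bounded_below (f : R -> R) (eta : R) :
  (forall q, 0 < q <= 1 -> 0 < f q <= 1 /\ Rmin q eta <= f q) ->
  forall p k, 0 < p <= 1 -> Rmin p eta <= iter k f p.
Proof.
  intros Hf p k Hp.
  enough (Hinv : 0 < iter k f p <= 1 /\ Rmin p eta <= iter k f p) by apply Hinv.
  apply (iter_invariant f (fun q => 0 < q <= 1 /\ Rmin p eta <= q));
    [|split; [exact Hp | apply Rmin_l]].
  intros q [Hq Hpq]. destruct (Hf q Hq) as [Hfq Hmin]. split; [exact Hfq|].
  apply Rle_trans with (Rmin q eta); [|exact Hmin].
  apply Rmin_glb; [exact Hpq | apply Rmin_r].
Qed.

Lemma exp_monotone (x y : R) : x <= y -> exp x <= exp y.
Proof. intros [Hlt|Heq]; [now apply Rlt_le, exp_increasing | subst; lra]. Qed.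

(* 1 - e^{-y} <= y, from the tangent line 1 + x <= e^x. *)
Lemma one_minus_exp_le (y : R) : 1 - exp (- y) <= y.
Proof. pose proof (exp_ineq1_le (- y)). lra. Qed.

(* 1 - e^{-y} >= y / (1 + y) for y >= 0, written without division. *)
Lemma one_minus_exp_ge (y : R) : 0 <= y -> y <= (1 - exp (- y)) * (1 + y).
Proof.
  intro Hy.
  assert (Hinv : exp (- y) * exp y = 1).
  { rewrite <- exp_plus. replace (- y + y) with 0 by ring. apply exp_0. }
  pose proof (exp_ineq1_le y). pose proof (exp_pos (- y)). nra.
Qed.

(* For q >= eps, 1 - e^{-bq} stays a fixed amount below b q: the map
   q |-> q - (1 - e^{-bq})/b is nondecreasing and positive at eps. *)
Lemma one_minus_exp_gap (beta eps : R) : 0 < beta -> 0 < eps ->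
  exists d, 0 < d /\ forall q, eps <= q -> 1 - exp (- (beta * q)) <= beta * (q - d).
Proof.
  intros Hb Heps.
  exists (eps - (1 - exp (- (beta * eps))) / beta). split.
  - assert (Hstrict : 1 - exp (- (beta * eps)) < beta * eps).
    { assert (Hne : - (beta * eps) <> 0) by nra.
      pose proof (exp_ineq1 _ Hne). lra. }
    cut ((1 - exp (- (beta * eps))) / beta < eps); [lra|].
    apply (Rmult_lt_reg_r beta); [exact Hb|].
    replace ((1 - exp (- (beta * eps))) / beta * beta)
      with (1 - exp (- (beta * eps))) by (field; lra).
    lra.
  - intros q Hq.
    replace (beta * (q - (eps - (1 - exp (- (beta * eps))) / beta)))
      with (beta * (q - eps) + (1 - exp (- (beta * eps)))) by (field; lra).
    replace (- (beta * q)) with (- (beta * eps) + - (beta * (q - eps))) by ring.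
    rewrite exp_plus.
    pose proof (one_minus_exp_le (beta * (q - eps))).
    assert (exp (- (beta * eps)) <= 1) by (rewrite <- exp_0; apply exp_monotone; nra).
    pose proof (exp_pos (- (beta * eps))).
    assert (0 <= beta * (q - eps)) by nra.
    nra.
Qed.

Lemma exp_growth_small (k y : R) : 1 < k -> 0 < y <= (k - 1) / (3 * k + 1) ->
  y <= k * (1 - exp (- y)) * exp (- (3 * y)).
Proof.
  intros Hk Hy.
  assert (Hthreshold : 1 + y <= k * (1 - 3 * y)).
  { destruct Hy as [_ Hy]. apply (Rmult_le_compat_r (3 * k + 1)) in Hy; [|lra].
    replace ((k - 1) / (3 * k + 1) * (3 * k + 1)) with (k - 1) in Hy by (field; lra).
    lra. }
  pose proof (one_minus_exp_ge y (Rlt_le _ _ (proj1 Hy))).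
  assert (Hexp3 : 1 - 3 * y <= exp (- (3 * y))) by (pose proof (exp_ineq1_le (- (3 * y))); lra).
  assert (exp (- y) <= 1) by (rewrite <- exp_0; apply exp_monotone; lra).
  assert (Hpos : 0 <= 1 - 3 * y) by nra.
  apply Rle_trans with ((1 - exp (- y)) * (k * (1 - 3 * y))).
  - apply Rle_trans with ((1 - exp (- y)) * (1 + y)); [assumption|].
    apply Rmult_le_compat_l; lra.
  - replace (k * (1 - exp (- y)) * exp (- (3 * y)))
      with ((1 - exp (- y)) * (k * exp (- (3 * y)))) by ring.
    apply Rmult_le_compat_l; [lra|]. apply Rmult_le_compat_l; lra.
Qed.

(* The branch x <= 1/2 of g_0 is the identity; on x > 1/2 we have
   1 - x < x, so (1-x)^3/x^2 lies between x (1-x)^3 and x. *)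
Lemma g0_bounds (x : R) : 0 < x < 1 -> x * (1 - x) ^ 3 <= g0 x <= x.
Proof.
  intro Hx. unfold g0. destruct (Rle_dec x (1 / 2)) as [Hsmall|Hlarge].
  - assert (0 <= (1 - x) ^ 3 <= 1).
    { split; [apply pow_le; lra|]. rewrite <- (pow1 3). apply pow_incr; lra. }
    nra.
  - assert (Hx2 : 0 < x ^ 2) by nra.
    assert (Hdiv : forall a b, 0 <= a <= b -> a / x ^ 2 <= b / x ^ 2).
    { intros a b Hab. apply Rmult_le_compat_r; [left; apply Rinv_0_lt_compat|]; lra. }
    assert (H1x : 0 <= (1 - x) ^ 3 <= x ^ 3) by (split; [apply pow_le | apply pow_incr]; lra).
    assert (Hx3 : x ^ 3 <= 1) by (rewrite <- (pow1 3); apply pow_incr; lra).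
    split.
    + replace (x * (1 - x) ^ 3) with (x ^ 3 * (1 - x) ^ 3 / x ^ 2) by (field; lra).
      apply Hdiv. split; [apply Rmult_le_pos; lra | nra].
    + replace x with (x ^ 3 / x ^ 2) at 3 by (field; lra). apply Hdiv. lra.
Qed.

(* With s = sqrt(1 - 4cx(1-x)) one has 2cx(1-x) <= 1 - s <= 2cx: the
   lower bound because (1-s)(1+s) = 4cx(1-x) and 1 + s <= 2, the upper
   bound because (1 - 2cx)^2 <= s^2. *)
Lemma sqrt_discriminant_bounds (c x : R) : 0 < c <= 1 -> 0 < x < 1 ->
  2 * c * x * (1 - x) <= 1 - sqrt (1 - 4 * c * x * (1 - x)) <= 2 * c * x.
Proof.
  intros Hc Hx.
  set (D := 1 - 4 * c * x * (1 - x)).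
  assert (Hcx : 0 <= c * x * (1 - x)) by (apply Rmult_le_pos; nra).
  assert (HD : 0 <= D <= 1).
  { unfold D. assert (0 <= (1 - c) * (x * (1 - x))) by (apply Rmult_le_pos; nra).
    pose proof (pow2_ge_0 (2 * x - 1)). nra. }
  pose proof (sqrt_pos D) as Hs0.
  pose proof (sqrt_sqrt D (proj1 HD)) as Hss.
  set (s := sqrt D) in *. clearbody s.
  assert (Hs1 : s <= 1) by nra.
  split.
  - assert ((1 - s) * (1 + s) = 4 * c * x * (1 - x)) by (unfold D in Hss; nra). nra.
  - destruct (Rle_dec (1 - 2 * c * x) 0) as [Hneg|Hpos]; [lra|].
    assert ((1 - 2 * c * x) * (1 - 2 * c * x) <= s * s) by (rewrite Hss; unfold D; nra).
    nra.
Qed.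

(* The same sandwich for the closed form of g_alpha, alpha in [0,1), x in (0,1):
   cube the previous bounds and divide by 8 c^2 x^2, c = 1 - alpha. *)
Lemma gpos_bounds (alpha x : R) : 0 <= alpha < 1 -> 0 < x < 1 ->
  (1 - alpha) * x * (1 - x) ^ 3 <= gpos alpha x <= (1 - alpha) * x.
Proof.
  intros Ha Hx. unfold gpos. destruct (Req_EM_T x 0) as [Hx0|_]; [lra|].
  set (c := 1 - alpha). assert (Hc : 0 < c <= 1) by (unfold c; lra). clearbody c.
  pose proof (sqrt_discriminant_bounds c x Hc Hx) as [Hlo Hhi].
  set (t := 1 - sqrt (1 - 4 * c * x * (1 - x))) in *. clearbody t.
  assert (Hden : 0 < 8 * c ^ 2 * x ^ 2) by (assert (0 < c * x) by nra; nra).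
  assert (Hcube : forall a b, 0 <= a <= b -> a ^ 3 / (8 * c ^ 2 * x ^ 2) <= b ^ 3 / (8 * c ^ 2 * x ^ 2)).
  { intros a b Hab. apply Rmult_le_compat_r; [left; apply Rinv_0_lt_compat; lra|].
    apply pow_incr; lra. }
  assert (0 <= 2 * c * x * (1 - x)) by (apply Rmult_le_pos; nra).
  split.
  - replace (c * x * (1 - x) ^ 3) with ((2 * c * x * (1 - x)) ^ 3 / (8 * c ^ 2 * x ^ 2))
      by (field; lra).
    apply Hcube. lra.
  - replace (c * x) with ((2 * c * x) ^ 3 / (8 * c ^ 2 * x ^ 2)) by (field; lra).
    apply Hcube. lra.
Qed.

Lemma g_bounds (alpha x : R) : 0 <= alpha < 1 -> 0 < x < 1 ->
  (1 - alpha) * x * (1 - x) ^ 3 <= g alpha x <= (1 - alpha) * x.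
Proof.
  intros Ha Hx. unfold g. destruct (Req_EM_T alpha 0) as [->|_].
  - rewrite !Rminus_0_r, !Rmult_1_l. now apply g0_bounds.
  - now apply gpos_bounds.
Qed.

Lemma one_minus_exp_range (y : R) : 0 < y -> 0 < 1 - exp (- y) < 1.
Proof.
  intro Hy. pose proof (exp_pos (- y)).
  assert (exp (- y) < 1) by (rewrite <- exp_0; apply exp_increasing; lra). lra.
Qed.

Lemma h_zero (alpha beta : R) : h alpha beta 0 = 0.
Proof.
  unfold h, g, g0, gpos. rewrite Rmult_0_r, Ropp_0, exp_0, Rminus_diag.
  destruct (Req_EM_T alpha 0); [destruct (Rle_dec 0 (1 / 2)); [reflexivity|lra]|].
  destruct (Req_EM_T 0 0); [reflexivity|lra].
Qed.

(* The sandwich for h, using (1 - x)^3 = e^{-3bq} for x = 1 - e^{-bq}. *)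
Lemma h_bounds (alpha beta q : R) : 0 <= alpha < 1 -> 0 < beta -> 0 < q ->
  (1 - alpha) * (1 - exp (- (beta * q))) * exp (- (3 * beta * q)) <= h alpha beta q
  <= (1 - alpha) * (1 - exp (- (beta * q))).
Proof.
  intros Ha Hb Hq. unfold h.
  assert (Hx : 0 < 1 - exp (- (beta * q)) < 1) by (apply one_minus_exp_range; nra).
  replace (exp (- (3 * beta * q))) with ((1 - (1 - exp (- (beta * q)))) ^ 3).
  - now apply g_bounds.
  - replace (- (3 * beta * q)) with (- (beta * q) + - (beta * q) + - (beta * q)) by ring.
    rewrite !exp_plus. ring.
Qed.

Lemma h_upper (alpha beta q : R) : 0 <= alpha < 1 -> 0 < beta -> 0 <= q ->
  0 <= h alpha beta q <= (1 - alpha) * (1 - exp (- (beta * q))).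
Proof.
  intros Ha Hb [Hq|<-].
  - destruct (h_bounds alpha beta q Ha Hb Hq) as [Hlo Hhi].
    assert (Hx : 0 < 1 - exp (- (beta * q)) < 1) by (apply one_minus_exp_range; nra).
    pose proof (exp_pos (- (3 * beta * q))).
    assert (0 <= (1 - alpha) * (1 - exp (- (beta * q)))) by (apply Rmult_le_pos; lra).
    split; [|exact Hhi]. apply Rle_trans with (2 := Hlo). now apply Rmult_le_pos; [|lra].
  - rewrite h_zero, Rmult_0_r, Ropp_0, exp_0. lra.
Qed.

Lemma h_subcritical_le (alpha beta q r : R) :
  0 <= alpha < 1 -> 0 < beta -> (1 - alpha) * beta <= 1 -> 0 <= q ->
  1 - exp (- (beta * q)) <= beta * r -> h alpha beta q <= r.
Proof.
  intros Ha Hb Hsub Hq Hexp.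
  destruct (h_upper alpha beta q Ha Hb Hq) as [_ Hhi].
  assert (exp (- (beta * q)) <= 1) by (rewrite <- exp_0; apply exp_monotone; nra).
  assert (0 <= r) by nra.
  apply Rle_trans with (1 := Hhi).
  apply Rle_trans with ((1 - alpha) * (beta * r)); [apply Rmult_le_compat_l; lra|].
  rewrite <- Rmult_assoc. nra.
Qed.

Lemma h_supercritical_lower (alpha beta : R) :
  0 <= alpha < 1 -> 0 < beta -> 1 < (1 - alpha) * beta ->
  exists eta, 0 < eta /\ forall q, 0 < q <= 1 ->
    0 < h alpha beta q <= 1 /\ Rmin q eta <= h alpha beta q.
Proof.
  intros Ha Hb Hsup.
  set (k := (1 - alpha) * beta) in *.
  set (q0 := (k - 1) / (3 * k + 1) / beta).
  assert (Hq0 : 0 < q0) by (apply Rdiv_lt_0_compat; [apply Rdiv_lt_0_compat|]; lra).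
  pose proof (one_minus_exp_range (beta * q0) ltac:(nra)) as Hx0.
  exists ((1 - alpha) * (1 - exp (- (beta * q0))) * exp (- (3 * beta))).
  split; [pose proof (exp_pos (- (3 * beta))); apply Rmult_lt_0_compat; [nra|lra]|].
  intros q Hq.
  destruct (h_bounds alpha beta q Ha Hb (proj1 Hq)) as [Hlo Hhi].
  pose proof (one_minus_exp_range (beta * q) ltac:(nra)) as Hx.
  pose proof (exp_pos (- (3 * beta * q))).
  assert (0 < (1 - alpha) * (1 - exp (- (beta * q)))) by (apply Rmult_lt_0_compat; lra).
  split; [split; nra|].
  destruct (Rle_dec q q0) as [Hsmall|Hlarge].
  - (* near 0: h(q) >= q by the growth estimate with y = b q *)
    apply Rle_trans with q; [apply Rmin_l|]. apply Rle_trans with (2 := Hlo).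
    assert (Hy : 0 < beta * q <= (k - 1) / (3 * k + 1)).
    { split; [nra|]. apply (Rmult_le_compat_l beta) in Hsmall; [|lra].
      unfold q0 in Hsmall. replace (beta * ((k - 1) / (3 * k + 1) / beta))
        with ((k - 1) / (3 * k + 1)) in Hsmall by (field; lra). exact Hsmall. }
    pose proof (exp_growth_small k (beta * q) Hsup Hy) as Hgrowth.
    replace (3 * (beta * q)) with (3 * beta * q) in Hgrowth by ring.
    unfold k in Hgrowth. apply (Rmult_le_reg_l beta); [exact Hb|]. nra.
  - (* away from 0: every factor of the lower bound is monotone in q *)
    apply Rle_trans with (2 := Hlo). apply Rle_trans with (1 := Rmin_r _ _).
    assert (exp (- (beta * q)) <= exp (- (beta * q0))) by (apply exp_monotone; nra).
    assert (exp (- (3 * beta)) <= exp (- (3 * beta * q))) by (apply exp_monotone; nra).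
    pose proof (exp_pos (- (3 * beta))).
    apply Rmult_le_compat; [nra | lra | apply Rmult_le_compat_l; lra | lra].
Qed.

Theorem mainTheorem7 (alpha beta : R) :
  0 <= alpha < 1 -> 0 < beta ->
  ((1 - alpha) * beta <= 1 ->
     forall p, 0 <= p <= 1 -> Un_cv (fun k => iter k (h alpha beta) p) 0)
  /\
  (1 < (1 - alpha) * beta ->
     forall p, 0 < p < 1 ->
       exists c, 0 < c /\ exists K : nat, forall k, (K <= k)%nat ->
         c <= iter k (h alpha beta) p).
Proof.
  intros Ha Hb. split.
  -
    intros Hsub. apply iter_tends_to_zero.
    + intros q Hq. split; [now apply h_upper|].
      apply h_subcritical_le; try lra. apply one_minus_exp_le.
    + intros eps Heps. destruct (one_minus_exp_gap beta eps Hb Heps) as [d [Hd Hgap]].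
      exists d. split; [exact Hd|]. intros q Hq.
      apply h_subcritical_le; try lra. now apply Hgap.
  -
    intros Hsup p Hp.
    destruct (h_supercritical_lower alpha beta Ha Hb Hsup) as [eta [Heta Hh]].
    exists (Rmin p eta). split; [now apply Rmin_glb_lt; lra|].
    exists 0%nat. intros k _. apply iter_bounded_below; [exact Hh | lra].
Qed.
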